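(* Let $\mathcal{F}\subseteq\mathcal{P}(\omega)$ be a free filter that is non-meager. Then there is a countable dense set $D\subseteq C_p(\xi(\mathcal{F}))$ such that for every crowded $P\subseteq D$ there is a crowded subset $Q\subseteq P$ whose closure in $C_p(\xi(\mathcal{F}))$ is compact.
   Context: A filter on $\omega$ is free if it contains all cofinite sets; it is non-meager if it is not a meager subset of the Cantor set $2^\omega$ (subsets of $\omega$ identified with characteristic functions). $\xi(\mathcal{F})$ is the space $\omega\cup\{\infty\}$ in which every point of $\omega$ is isolated and the neighborhoods of $\infty$ are the sets $\{\infty\}\cup A$ with $A\in\mathcal{F}$. $C_p(X)$ is the space of continuous functions $X\to\mathbb{R}$ with the pointwise convergence topology. A space is crowded if it is non-empty and has no isolated points. *)

From HB Require Import structures.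
From mathcomp Require Import all_boot all_order all_algebra.
From mathcomp Require Import all_classical all_reals all_analysis.
Import Order.TTheory GRing.Theory Num.Theory.
Import numFieldTopology.Exports numFieldNormedType.Exports.
Local Open Scope classical_set_scope.
Local Open Scope ring_scope.

Definition is_filter_on_nat (F : set (set nat)) : Prop :=
  [/\ F setT, ~ F set0,
      (forall A B, F A -> A `<=` B -> F B) &
      (forall A B, F A -> F B -> F (A `&` B))].

Definition free_filter (F : set (set nat)) : Prop :=
  is_filter_on_nat F /\ forall A : set nat, finite_set (~` A) -> F A.

Definition nowhere_dense_cantor (A : set cantor_space) : Prop :=
  interior (closure A) = set0.

Definition meager_cantor (S : set cantor_space) : Prop :=
  exists N : nat -> set cantor_space,
    (forall n, nowhere_dense_cantor (N n)) /\ S `<=` \bigcup_n N n.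

(* F viewed as a subset of 2^omega via characteristic functions *)
Definition filter_in_cantor (F : set (set nat)) : set cantor_space :=
  [set f : cantor_space | F [set n | f n = true]].

Definition non_meager_filter (F : set (set nat)) : Prop :=
  ~ meager_cantor (filter_in_cantor F).

(* The space xi(F) = omega ∪ {∞}: points are [option nat], with
   [Some n] = n ∈ omega and [None] = ∞.  Points of omega are isolated;
   the neighbourhoods of ∞ are {∞} ∪ A, A ∈ F. *)
Definition xi_open (F : set (set nat)) (U : set (option nat)) : Prop :=
  U None -> exists A, F A /\ forall n, A n -> U (Some n).

Definition xi_continuous (R : realType) (F : set (set nat))
    (f : option nat -> R) : Prop :=
  forall V : set R, open V -> xi_open F (f @^-1` V).

(* C_p(xi(F)): the continuous real functions on xi(F), as a subset of the
   space of all functions with the pointwise-convergence (product) topology. *)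
Definition Cp_xi (R : realType) (F : set (set nat)) : set {ptws option nat -> R} :=
  [set f | @xi_continuous R F f].

Definition crowded {T : topologicalType} (P : set T) : Prop :=
  P !=set0 /\ P `<=` limit_point P.

From HB Require Import structures.
From mathcomp Require Import all_boot all_order all_algebra.
From mathcomp Require Import all_classical all_reals all_analysis.
From mathcomp Require Import lra.
Import Order.TTheory GRing.Theory Num.Theory.
Import numFieldTopology.Exports numFieldNormedType.Exports.
Local Open Scope classical_set_scope.
Local Open Scope ring_scope.

(* Take for D the eventually constant functions with rational values.  Inside a
   crowded P included in D grow a binary tree: at level k every node q gets a
   sibling in P, different from q and 2^-(k+1)-close to q at infinity and at the
   points below m_k, where m_k is so large that all nodes of level k are constant
   from m_k on.  As F is non-meager, Talagrand's characterization gives A in F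
   missing infinitely many blocks [m_k, m_(k+1)); splitting only at those levels
   still gives a crowded Q included in P.  The closure of Q is bounded
   coordinatewise, hence compact; and on a block [m_i, m_(i+1)) that meets A no
   splitting ever happens, so every limit g of Q is within 2^-i of g(infinity)
   there, which makes g continuous at infinity along A. *)

Lemma closure_le {T : topologicalType} {R : realType} {phi : T -> R} {r : R}
    {Q : set T} :
  continuous phi -> (forall h, Q h -> phi h <= r) ->
  closure Q `<=` [set h | phi h <= r].
Proof.
move=> phi_cont Qr; have: closed [set h | phi h <= r].
  apply: (@preimage_closed _ _ phi [set x | x <= r]); last exact: closed_le.
  move=> h _; exact: phi_cont.
by move/closure_id ->; exact: closureS.
Qed.

Lemma cvg_seq_closure {T : topologicalType} {S : set T} (u : nat -> T) (x : T) :
  u @ \oo --> x -> (forall t, S (u t)) -> closure S x.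
Proof.
by move=> ux Su B /ux [N _ uB]; exists (u N); split => //; exact: uB (leqnn N).
Qed.

Lemma cvg_seq_limit_point {T : topologicalType} {S : set T} (u : nat -> T)
    (x : T) :
  u @ \oo --> x -> (forall t, S (u t) /\ u t != x) -> limit_point S x.
Proof.
move=> ux Su B /ux [N _ uB]; have [SuN uNx] := Su N.
by exists (u N); split => //; exact: uB (leqnn N).
Qed.

Lemma ptws_cvg (I : Type) (V : topologicalType) (u : nat -> {ptws I -> V})
    (f : {ptws I -> V}) :
  (forall i, (fun t => u t i) @ \oo --> f i) -> u @ \oo --> f.
Proof.
move=> uf; apply/cvg_sup => i U [_ [[W oW <-] Wfi WU]].
apply: filterS WU _; exact: uf i W (open_nbhs_nbhs (conj oW Wfi)).
Qed.

Section PointwiseReal.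
Context {I : eqType} {R : realType}.
Implicit Types f : {ptws I -> R}.

Lemma continuous_ptws_dist a b :
  continuous (fun g : {ptws I -> R} => `|g a - g b|).
Proof.
move=> g; apply: (continuous_comp (f := fun g : {ptws I -> R} => g a - g b)).
  exact: (@cvgB R R^o _ _ _ (fun h : {ptws I -> R} => h a) (fun h => h b) _ _
    (@proj_continuous _ _ a g) (@proj_continuous _ _ b g)).
exact: norm_continuous.
Qed.

Lemma continuous_ptws_norm a : continuous (fun g : {ptws I -> R} => `|g a|).
Proof.
move=> g; apply: (continuous_comp (f := fun g : {ptws I -> R} => g a)).
  exact: (@proj_continuous _ _ a g).
exact: norm_continuous.
Qed.

Lemma nbhs_ptws_coord f a {e : R} :
  0 < e -> nbhs f [set g : {ptws I -> R} | `|f a - g a| < e].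
Proof.
move=> e0; apply: (@proj_continuous I (fun=> R) a f [set x | `|f a - x| < e]).
exact: nbhsx_ballx.
Qed.

Lemma ptws_box_compact (b : I -> R) :
  compact [set g : {ptws I -> R} | forall a, `|g a| <= b a].
Proof.
have := @tychonoff I (fun=> R) (fun a => `[- b a, b a]%classic)
  (fun a => @segment_compact R (- b a) (b a)).
by congr compact; apply/seteqP; split => g /= gb a; have := gb a;
  rewrite /= in_itv /= ler_norml.
Qed.

End PointwiseReal.

Definition tol (R : realType) (k : nat) : R := 2^-1 ^+ k.

Section Tolerance.
Variable R : realType.
Local Notation tol := (tol R).

Lemma tol_gt0 k : 0 < tol k.
Proof. by rewrite exprn_gt0 // invr_gt0. Qed.

Lemma tol_split k : tol k = tol k.+1 + tol k.+1.
Proof. by rewrite /tol exprS mulrC -splitr. Qed.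

Lemma tol_nonincr {i j : nat} : (i <= j)%N -> tol j <= tol i.
Proof.
move=> ij; rewrite /tol -(subnKC ij) exprD ler_piMr ?tol_gt0 //.
by rewrite exprn_ile1 // ?invr_ge0 ?ler0n // invf_le1 // ler1n.
Qed.

Lemma tol_small {e : R} : 0 < e -> exists N, tol N < e.
Proof.
move=> e0; have /cvgrPdist_lt/(_ e e0) [N _ tolN] : tol @ \oo --> 0.
  by apply: cvg_expr; rewrite ger0_norm ?invr_ge0 // invf_lt1 // ltr1n.
by exists N; have := tolN N (leqnn N); rewrite /= sub0r normrN gtr0_norm ?tol_gt0.
Qed.

End Tolerance.

Definition below (L : nat) (c : option nat) : bool :=
  if c is Some n then (n < L)%N else true.

Definition rank (c : option nat) : nat := if c is Some n then n.+1 else 0.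

Lemma nbhs_ptws_below {R : realType} (f : {ptws option nat -> R}) L {e : R} :
  0 < e -> nbhs f [set g : {ptws option nat -> R} |
                   forall c, below L c -> `|f c - g c| < e].
Proof.
move=> e0; elim: L => [|L IH].
  by apply: filterS (nbhs_ptws_coord f None e0) => g fg [].
apply: filterS (filterI IH (nbhs_ptws_coord f (Some L) e0)) => g [fg fgL] [n|] /=.
  by rewrite ltnS leq_eqVlt => /predU1P [->|]; [|exact: fg (Some n)].
exact: fg None.
Qed.

Lemma cofinite_in_free_filter {F : set (set nat)} N :
  free_filter F -> F [set n | (N <= n)%N].
Proof.
case=> _; apply; rewrite (_ : ~` _ = `I_N); first exact: finite_II.
by apply/seteqP; split => n /=; rewrite ltnNge => /negP.
Qed.

Lemma xi_continuous_cvg (R : realType) (F : set (set nat)) (g : option nat -> R) :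
  (forall e, 0 < e -> F [set n | `|g (Some n) - g None| < e]) ->
  xi_continuous R F g.
Proof.
move=> gF V oV Vg.
have /nbhs_ballP [e e0 eV] : nbhs (g None) V by exact: open_nbhs_nbhs.
exists [set n | `|g (Some n) - g None| < e]; split; first exact: gF.
by move=> n gn; apply: eV; rewrite -ball_normE /ball_ /= distrC.
Qed.

Lemma eventually_const_xi_continuous (R : realType) (F : set (set nat))
    (g : option nat -> R) N :
  free_filter F -> (forall n, (N <= n)%N -> g (Some n) = g None) ->
  xi_continuous R F g.
Proof.
move=> Ffree gN; apply: xi_continuous_cvg => e e0.
have [[_ _ Fsup _] _] := Ffree.
apply: Fsup (cofinite_in_free_filter N Ffree) _ => n /gN gn.
by rewrite /= gn subrr normr0.
Qed.

Section RationalStepFunctions.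
Variable R : realType.

Definition rat_step (s : seq rat * rat) : {ptws option nat -> R} :=
  fun c => ratr (if c is Some n then nth s.2 s.1 n else s.2).

Definition rat_steps : set {ptws option nat -> R} := range rat_step.

Lemma countable_rat_steps : countable rat_steps.
Proof. exact: sub_countable (card_image_le _ _) (countableP _). Qed.

Lemma rat_steps_eventually_const q : rat_steps q ->
  exists N, forall n, (N <= n)%N -> q (Some n) = q None.
Proof.
by case=> s _ <-; exists (size s.1) => n sn; rewrite /rat_step nth_default.
Qed.

Lemma closure_rat_steps : closure rat_steps = setT.
Proof.
apply/seteqP; split => // f _.
have /choice [qa qaP] (xt : R * nat) :
    exists a : rat, `|xt.1 - ratr a| < tol R xt.2.
  have t0 := tol_gt0 R xt.2.
  have [a] := @rat_in_itvoo R (xt.1 - tol R xt.2) (xt.1 + tol R xt.2) ltac:(lra).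
  by rewrite in_itv /= => /andP [a1 a2]; exists a; rewrite ltr_norml; lra.
pose s t := ([seq qa (f (Some n), t) | n <- iota 0 t], qa (f None, t)).
apply: (cvg_seq_closure (rat_step \o s)); last by move=> t; exists (s t).
apply: ptws_cvg => c; apply/cvgrPdist_lt => e e0.
have [N tolN] := tol_small R e0.
exists (maxn N (rank c)) => // t /=; rewrite geq_max.
case/andP => Nt ct; apply: lt_trans _ (le_lt_trans (tol_nonincr R Nt) tolN).
rewrite /rat_step; case: c ct => [n nt|_] /=; last exact: qaP (f None, t).
by rewrite (nth_map 0%N) ?size_iota // nth_iota // add0n; exact: qaP (_, t).
Qed.

End RationalStepFunctions.

Definition block (m : nat -> nat) (k n : nat) : bool := (m k <= n < m k.+1)%N.

Section Blocks.
Context {m : nat -> nat}.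
Hypothesis m_incr : forall k, (m k < m k.+1)%N.

Lemma incr_geq_id k : (k <= m k)%N.
Proof. by elim: k => // k IH; exact: leq_ltn_trans IH (m_incr k). Qed.

Lemma incr_leq {i j} : (i <= j)%N -> (m i <= m j)%N.
Proof. exact/ltnW_homo/(homo_ltn ltn_trans m_incr). Qed.

Lemma block_exists {N n} : (m N <= n)%N -> exists2 i, (N <= i)%N & block m i n.
Proof.
move=> Nn; suff key d : (n < m (N + d))%N -> exists2 i, (N <= i)%N & block m i n.
  exact/key/(leq_trans (leq_addl N n.+1))/incr_geq_id.
elim: d => [|d IH]; first by rewrite addn0 ltnNge Nn.
case: (ltnP n (m (N + d))) => [/IH //|Nd_n nNd].
by exists (N + d)%N; [exact: leq_addr|rewrite /block Nd_n -addnS].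
Qed.

End Blocks.

Lemma cantor_prefix_nbhs (h : cantor_space) L :
  nbhs h [set f : cantor_space | forall i, (i < L)%N -> f i = h i].
Proof.
elim: L => [|L IH]; first by apply: filterS filterT => f _ [].
have hL : nbhs h [set f : cantor_space | f L = h L].
  apply: (@proj_continuous nat (fun=> bool) L h [set h L]).
  exact/principal_filterP.
apply: filterS (filterI IH hL) => f [fh fL] i; rewrite ltnS leq_eqVlt.
by case/orP => [/eqP -> //|/fh].
Qed.

Lemma cantor_truncation_cvg (g : cantor_space) :
  (fun t : nat => (fun i => (i < t)%N && g i) : cantor_space) @ \oo --> g.
Proof.
apply: ptws_cvg => i W /nbhs_singleton Wg.
by exists i.+1 => // t /= it; rewrite it.
Qed.

Lemma nonmeager_filter_misses_blocks {F : set (set nat)} {m : nat -> nat} :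
  non_meager_filter F -> (forall k, (m k < m k.+1)%N) ->
  exists A, F A /\ forall N, exists2 k, (N <= k)%N &
    forall n, block m k n -> ~ A n.
Proof.
move=> nonmeager m_incr; apply: contrapT => noA; apply: nonmeager.
pose M N := [set f : cantor_space |
  forall k, (N <= k)%N -> exists2 n, block m k n & f n].
(* Otherwise F is covered by the [M N], which are nowhere dense: near a point of
   the interior of the closure of [M N] lies one of its truncations, which
   vanishes on every late block, whereas the points of [M N] do not. *)
exists M; split; last first.
  move=> f Ff; apply: contrapT => fM; apply: noA; exists [set n | f n].
  split => // N; apply: contrapT => noK; apply: fM; exists N => //= k Nk.
  apply: contrapT => kf; apply: noK; exists k => // n mkn fn.
  by apply: kf; exists n.
move=> N; apply/seteqP; split => // g /= gint.
have [t0 _ /(_ t0 (leqnn t0)) /= trunc_cl] := cantor_truncation_cvg g _ gint.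
pose k := maxn N t0.
have [f [Mf fh]] := trunc_cl _ (cantor_prefix_nbhs _ (m k.+1)).
have [n /andP [kn nk] fn] := Mf k (leq_maxl _ _).
have t0n : (t0 <= n)%N.
  exact: leq_trans (leq_maxr N t0) (leq_trans (incr_geq_id m_incr k) kn).
by have := fh n nk; rewrite fn ltnNge t0n.
Qed.

Section CantorTree.
Variables (R : realType) (P : set {ptws option nat -> R}).
Local Notation T := {ptws option nat -> R}.
Local Notation tol := (tol R).
Variables (q0 : T) (sup : T -> nat) (ch : T -> nat -> nat -> T).
Hypothesis P_q0 : P q0.
Hypothesis sup_const :
  forall q, P q -> forall n, (sup q <= n)%N -> q (Some n) = q None.
Hypothesis ch_spec : forall q L k, P q -> [/\ P (ch q L k), ch q L k != q &
  forall c, below L c -> `|ch q L k c - q c| < tol k.+1].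

Definition split_level (L k : nat) (s : seq T) : seq T :=
  s ++ [seq ch q L k | q <- s].

Lemma split_levelP L k s x : x \in split_level L k s ->
  x \in s \/ exists2 p, p \in s & x = ch p L k.
Proof. by rewrite mem_cat => /orP [|/mapP]; [left|right]. Qed.

Fixpoint full_tree (k : nat) : seq T * nat :=
  if k is k'.+1 then
    let s := split_level (full_tree k').2 k' (full_tree k').1 in
    (s, maxn (full_tree k').2.+1 (\max_(q <- s) sup q))
  else ([:: q0], (sup q0).+1).

Definition level k := (full_tree k).1.
Definition cut k := (full_tree k).2.

Lemma cut_incr k : (cut k < cut k.+1)%N.
Proof. exact: leq_maxl. Qed.

Lemma below_cut {k c} : (rank c <= k)%N -> below (cut k) c.
Proof. by case: c => //= n nk; exact: leq_trans nk (incr_geq_id cut_incr k). Qed.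

Lemma below_cut_mono {k k' c} :
  (k <= k')%N -> below (cut k) c -> below (cut k') c.
Proof.
by case: c => //= n kk' nk; exact: leq_trans nk (incr_leq cut_incr kk').
Qed.

Lemma level_in_P {k x} : x \in level k -> P x.
Proof.
elim: k x => [x|k IH x /split_levelP [/IH //|[p /IH Pp ->]]].
  by rewrite inE => /eqP ->.
by have [] := ch_spec p (cut k) k Pp.
Qed.

Lemma level_const {k x n} :
  x \in level k -> (cut k <= n)%N -> x (Some n) = x None.
Proof.
move=> xk kn; apply: (sup_const _ (level_in_P xk) _ (leq_trans _ kn)).
case: k xk {kn} => [|k] xk; first by move: xk; rewrite inE => /eqP ->.
exact: leq_trans (leq_bigmax_seq _ xk erefl) (leq_maxr _ _).
Qed.

Section Pruned.
Variable good : nat -> bool.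

Fixpoint pruned (k : nat) : seq T :=
  if k is k'.+1 then
    if good k' then split_level (cut k') k' (pruned k') else pruned k'
  else [:: q0].

Lemma prunedSP k x : x \in pruned k.+1 ->
  x \in pruned k \/ good k /\ exists2 p, p \in pruned k & x = ch p (cut k) k.
Proof.
rewrite /=; case: (good k) => [/split_levelP [|pk]|]; [left|right|left] => //.
Qed.

Lemma pruned_mono {k k'} : (k <= k')%N -> {subset pruned k <= pruned k'}.
Proof.
apply: (@homo_leq _ pruned (fun s s' => {subset s <= s'})) =>
  [s x //|s1 s2 s3 s12 s23 x /s12/s23 //|j x xj /=].
by case: (good j); rewrite // mem_cat xj.
Qed.

Lemma pruned_sub_level {k} : {subset pruned k <= level k}.
Proof.
elim: k => [//|k IH] x /prunedSP [/IH xk|[_ [p /IH pk ->]]]; rewrite mem_cat.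
  by rewrite xk.
by apply/orP; right; apply: map_f.
Qed.

Lemma pruned_in_P {k x} : x \in pruned k -> P x.
Proof. by move/pruned_sub_level/level_in_P. Qed.

Lemma pruned_ancestor {k0 d c x} : below (cut k0) c -> x \in pruned (k0 + d) ->
  exists2 p, p \in pruned k0 & `|x c - p c| <= tol k0 - tol (k0 + d).
Proof.
move=> ck0; elim: d x => [x xk0|d IH x].
  by rewrite addn0 in xk0 *; exists x; rewrite // !subrr normr0.
rewrite addnS => /prunedSP [/IH [p pk0 xp]|[_ [y yk ->]]].
  exists p => //; apply: le_trans xp _.
  by rewrite lerD2l lerN2 tol_nonincr.
have [p pk0 yp] := IH y yk; exists p => //.
have [_ _ /(_ c (below_cut_mono (leq_addr d k0) ck0)) xy] :=
  ch_spec y (cut (k0 + d)) (k0 + d) (pruned_in_P yk).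
have := ler_distD (y c) (ch y (cut (k0 + d)) (k0 + d) c) (p c).
have := tol_split R (k0 + d); lra.
Qed.

Lemma pruned_bounded c : exists b, forall k x, x \in pruned k -> `|x c| <= b.
Proof.
exists (\big[Num.max/0]_(p <- pruned (rank c)) `|p c| + tol (rank c)) => k x xk.
have /pruned_mono/(_ x xk) : (k <= rank c + (k - rank c))%N.
  by rewrite -leq_subLR leqnn.
case/(pruned_ancestor (below_cut (leqnn _))) => p pk xp.
have := le_bigmax_seq 0 p predT (fun p : T => `|p c|) pk erefl.
have := ler_distD (p c) (x c) 0; rewrite !subr0.
have := tol_gt0 R (rank c + (k - rank c)); lra.
Qed.

(* Level [i] is not split, so nodes of level [i.+1] are constant on block [i];
   a later child moves the values on that block and at infinity by less than
   [tol k.+1] each. *)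
Lemma pruned_bad_block_dev {i n k x} : ~~ good i -> block cut i n -> (i < k)%N ->
  x \in pruned k -> `|x (Some n) - x None| <= tol i - tol k *+ 2.
Proof.
move=> bad /andP [ni ni']; elim: k x => [//|k IH] x; rewrite ltnS leq_eqVlt.
case/orP => [/eqP ik|ik] /prunedSP [xk|[gk [p pk ->]]].
- have xn : x (Some n) = x None.
    by rewrite -ik in xk; exact: level_const (pruned_sub_level _ xk) ni.
  by rewrite xn subrr normr0 -ik [X in X - _]tol_split mulr2n subrr.
- by move: bad; rewrite ik gk.
- apply: le_trans (IH x ik xk) _; rewrite lerD2l lerN2 lerMn2r /=.
  exact: tol_nonincr.
have [_ _ chp] := ch_spec p (cut k) k (pruned_in_P pk).
have := chp None erefl.
have := chp (Some n) (leq_trans ni' (incr_leq cut_incr ik)).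
have := IH p ik pk; have := tol_split R k.
set a := ch p _ _ (Some n); set b := ch p _ _ None.
have := ler_distD (p (Some n)) a b; have := ler_distD (p None) (p (Some n)) b.
rewrite !mulr2n (distrC (p None) b); lra.
Qed.

Definition tree : set T := [set x | exists k, x \in pruned k].

Lemma tree_sub_P : tree `<=` P.
Proof. by move=> x [k /pruned_in_P]. Qed.

Lemma tree_crowded : (forall N, exists2 k, (N <= k)%N & good k) -> crowded tree.
Proof.
move=> good_inf; split; first by exists q0, 0%N; rewrite inE.
move=> q [k qk]; have Pq := pruned_in_P qk.
have /choice [kt /all_and2 [kt_ge kt_good]] t :
    exists k', (maxn k t <= k')%N /\ good k'.
  by have [k' ? ?] := good_inf (maxn k t); exists k'.
pose y t := ch q (cut (kt t)) (kt t).
apply: (cvg_seq_limit_point y).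
  apply: ptws_cvg => c; apply/cvgrPdist_lt => e e0.
  have [N tolN] := tol_small R e0.
  exists (maxn N (rank c)) => // t /=; rewrite geq_max => /andP [Nt ct].
  have tkt : (t <= kt t)%N := leq_trans (leq_maxr k t) (kt_ge t).
  have [_ _ /(_ c (below_cut (leq_trans ct tkt))) yq] :=
    ch_spec q (cut (kt t)) (kt t) Pq.
  have Nkt : (N <= (kt t).+1)%N := leq_trans Nt (leq_trans tkt (leqnSn _)).
  by rewrite distrC (lt_trans yq (le_lt_trans (tol_nonincr R Nkt) tolN)).
move=> t; have [_ yq _] := ch_spec q (cut (kt t)) (kt t) Pq; split => //.
exists (kt t).+1; rewrite /= kt_good mem_cat; apply/orP; right; apply: map_f.
exact: pruned_mono (leq_trans (leq_maxl k t) (kt_ge t)) _ qk.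
Qed.

Lemma closure_tree_bounded :
  exists b : option nat -> R, closure tree `<=` [set g | forall c, `|g c| <= b c].
Proof.
have /choice [b bP] := pruned_bounded.
exists b => g gcl c; apply: (closure_le (continuous_ptws_norm c) _ _ gcl).
by move=> x [k xk]; exact: bP c k x xk.
Qed.

Lemma closure_tree_bad_block_dev {i n} : ~~ good i -> block cut i n ->
  closure tree `<=` [set g | `|g (Some n) - g None| <= tol i].
Proof.
move=> bad iN; apply: closure_le (continuous_ptws_dist _ _) _ => x [k xk] /=.
have ik : (i < maxn k i.+1)%N by rewrite leq_max leqnn orbT.
have xk' := pruned_mono (leq_maxl k i.+1) _ xk.
apply: le_trans (pruned_bad_block_dev bad iN ik xk') _.
by rewrite lerBlDr lerDl mulrn_wge0 // ltW ?tol_gt0.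
Qed.

Lemma closure_tree_xi_continuous F A : free_filter F -> F A ->
  (forall k, good k -> forall n, block cut k n -> ~ A n) ->
  closure tree `<=` Cp_xi R F.
Proof.
move=> Ffree FA Agood g gcl; apply: xi_continuous_cvg => e e0.
have [N tolN] := tol_small R e0.
have [[_ _ Fsup FI] _] := Ffree.
apply: Fsup (FI _ _ FA (cofinite_in_free_filter (cut N) Ffree)) _ => n [An Nn].
have [i Ni iN] := block_exists cut_incr Nn.
have bad : ~~ good i by apply/negP => gi; exact: Agood i gi n iN An.
apply: le_lt_trans (closure_tree_bad_block_dev bad iN g gcl) _.
exact: le_lt_trans (tol_nonincr R Ni) tolN.
Qed.

Lemma compact_closure_tree : compact (closure tree).
Proof.
have [b bP] := closure_tree_bounded.
by apply: (subclosed_compact _ (ptws_box_compact b) bP); exact: closed_closure.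
Qed.

End Pruned.

Lemma cantor_subtree F A : free_filter F -> F A ->
  (forall N, exists2 k, (N <= k)%N & forall n, block cut k n -> ~ A n) ->
  exists Q, [/\ Q `<=` P, crowded Q & compact (closure Q `&` Cp_xi R F)].
Proof.
move=> Ffree FA Amiss; pose good k := `[< forall n, block cut k n -> ~ A n >].
exists (tree good); split.
- exact: tree_sub_P.
- apply: tree_crowded => N; have [k Nk kA] := Amiss N.
  by exists k => //; apply/asboolP.
- rewrite setIidl; first exact: compact_closure_tree.
  by apply: closure_tree_xi_continuous Ffree FA _ => k /asboolP.
Qed.

End CantorTree.

Lemma rat_steps_modulus {R : realType} {P : set {ptws option nat -> R}} :
  P `<=` rat_steps R -> exists sup : {ptws option nat -> R} -> nat,
    forall q, P q -> forall n, (sup q <= n)%N -> q (Some n) = q None.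
Proof.
move=> PD; have /choice [sup supP] (q : {ptws option nat -> R}) :
    exists N, P q -> forall n, (N <= n)%N -> q (Some n) = q None.
  have [/PD/rat_steps_eventually_const [N qN]|nPq] := pselect (P q).
    by exists N.
  by exists 0%N => /nPq.
by exists sup.
Qed.

Lemma limit_point_approximants {R : realType} {P : set {ptws option nat -> R}} :
  P `<=` limit_point P ->
  exists ch : {ptws option nat -> R} -> nat -> nat -> {ptws option nat -> R},
    forall q L k, P q -> [/\ P (ch q L k), ch q L k != q &
      forall c, below L c -> `|ch q L k c - q c| < tol R k.+1].
Proof.
move=> Plim; have /choice [ch chP] (qLk : {ptws option nat -> R} * nat * nat) :
    exists y, P qLk.1.1 -> [/\ P y, y != qLk.1.1 &
      forall c, below qLk.1.2 c -> `|y c - qLk.1.1 c| < tol R qLk.2.+1].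
  case: qLk => [[q L] k] /=; have [Pq|nPq] := pselect (P q); last by exists q.
  have [y [yq Py yqL]] := Plim q Pq _ (nbhs_ptws_below q L (tol_gt0 R k.+1)).
  by exists y => _; split => // c /yqL; rewrite distrC.
by exists (fun q L k => ch (q, L, k)) => q L k; exact: chP (q, L, k).
Qed.

Theorem mainTheorem9 (R : realType) (F : set (set nat)) :
  free_filter F -> non_meager_filter F ->
  exists D : set {ptws option nat -> R},
    [/\ countable D, D `<=` Cp_xi R F, Cp_xi R F `<=` closure D &
      forall P, P `<=` D -> crowded P ->
        exists Q, [/\ Q `<=` P, crowded Q &
          compact (closure Q `&` Cp_xi R F)]].
Proof.
move=> Ffree nonmeager; exists (rat_steps R); split.
- exact: countable_rat_steps.
- move=> q /rat_steps_eventually_const [N qN].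
  exact: eventually_const_xi_continuous Ffree qN.
- by rewrite closure_rat_steps.
move=> P PD [[q0 Pq0] Plim].
have [sup supP] := rat_steps_modulus PD.
have [ch chP] := limit_point_approximants Plim.
have [A [FA Amiss]] :=
  nonmeager_filter_misses_blocks nonmeager (cut_incr R q0 sup ch).
exact: (@cantor_subtree R P q0 sup ch Pq0 supP chP F A Ffree FA Amiss).
Qed.
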